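(* Let $C$ be a convex chain with endpoints $p$ and $q$. If $C$ is contained in $D(p,q)$, then the stretch factor of $C$ is at most $\frac{\pi}{2}$.
   Context: A chain is a sequence of points $p=c_1,\dots,c_m=q$ together with the segments $c_ic_{i+1}$; it is convex if the polygon $c_1c_2\cdots c_m$ is convex (the points are in convex position and appear in this cyclic order on their convex hull). $D(p,q)$ is the closed disk having the segment $pq$ as a diameter. The stretch factor of the chain is the smallest $t$ such that for any two vertices $u,v$ of $C$, the length of the sub-chain of $C$ between $u$ and $v$ is at most $t|uv|$. *)

From Stdlib Require Import Reals Lra.
Open Scope R_scope.

Definition point := (R * R)%type.

Definition dist (a b : point) : R :=
  sqrt ((fst a - fst b) ^ 2 + (snd a - snd b) ^ 2).

Definition orient (a b c : point) : R :=
  (fst b - fst a) * (snd c - snd a) - (snd b - snd a) * (fst c - fst a).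

(* A chain with m vertices c 0, ..., c (m-1); p = c 0, q = c (m-1). *)

(* Convex chain: the polygon c 0 c 1 ... c (m-1) is convex, i.e. the points
   are in convex position and appear in this cyclic order on their hull:
   every triple taken in sequence order has the same (strict) orientation. *)
Definition convex_chain (c : nat -> point) (m : nat) : Prop :=
  (forall i j k, (i < j)%nat -> (j < k)%nat -> (k < m)%nat ->
     0 < orient (c i) (c j) (c k)) \/
  (forall i j k, (i < j)%nat -> (j < k)%nat -> (k < m)%nat ->
     orient (c i) (c j) (c k) < 0).

Definition seg_point (a b : point) (t : R) : point :=
  ((1 - t) * fst a + t * fst b, (1 - t) * snd a + t * snd b).

Definition in_diam_disk (p q x : point) : Prop :=
  dist x ((fst p + fst q) / 2, (snd p + snd q) / 2) <= dist p q / 2.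

Definition chain_in_diam_disk (c : nat -> point) (m : nat) : Prop :=
  forall i t, (S i < m)%nat -> 0 <= t <= 1 ->
    in_diam_disk (c 0%nat) (c (m - 1)%nat) (seg_point (c i) (c (S i)) t).

Fixpoint subchain_length (c : nat -> point) (i n : nat) : R :=
  match n with
  | O => 0
  | S n' => dist (c i) (c (S i)) + subchain_length c (S i) n'
  end.

Definition stretch_at_most (c : nat -> point) (m : nat) (t : R) : Prop :=
  forall i j, (i <= j)%nat -> (j < m)%nat ->
    subchain_length c i (j - i) <= t * dist (c i) (c j).

(* Convexity propagates the containment in the diametral disk to every
   sub-chain, so it suffices to bound the length of a convex chain from [a] to
   [b] lying in D(a,b) by pi |ab| / 2. Such a chain is monotone in the
   direction u of [ab]. Let o and r be the centre and radius of the disk, w_k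
   the unit direction of the edge reaching p_k, and theta_k in [-pi/2, pi/2]
   its angle from u. Along the chain theta_k increases, and the potential
   r theta_k + <p_k - o, w_k> grows at each step by at least the length of
   the edge, because a chord of the unit circle is shorter than its arc; over
   the whole chain it grows by at most pi r. *)

From Pilot Require Import Defs.
From Stdlib Require Import Reals Lra Psatz Lia.
Import Defs.
Open Scope R_scope.

Definition vsub (a b : point) : point := (fst a - fst b, snd a - snd b).
Definition vscale (k : R) (a : point) : point := (k * fst a, k * snd a).
Definition dot (a b : point) : R := fst a * fst b + snd a * snd b.
Definition cross (a b : point) : R := fst a * snd b - snd a * fst b.
Definition norm (a : point) : R := sqrt (dot a a).
Definition unitv (a : point) : point := vscale (/ norm a) a.
Definition midpoint (a b : point) : point := ((fst a + fst b) / 2, (snd a + snd b) / 2).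

Ltac coords := unfold dot, cross, vsub, vscale, orient in *; simpl in *.

Lemma dot_self_ge0 (a : point) : 0 <= dot a a.
Proof. coords; nra. Qed.

Lemma lagrange_identity (u w : point) :
  dot u w ^ 2 + cross u w ^ 2 = dot u u * dot w w.
Proof. coords; ring. Qed.

Lemma cauchy_schwarz_sq (x v : point) : dot x v ^ 2 <= dot x x * dot v v.
Proof. rewrite <- lagrange_identity; nra. Qed.

Lemma cross_nonzero_l (x y : point) : cross x y <> 0 -> 0 < dot x x.
Proof.
  intros Hc; destruct (Rle_lt_or_eq_dec _ _ (dot_self_ge0 x)) as [|Hx]; auto.
  exfalso; apply Hc; coords.
  assert (fst x = 0) by nra; assert (snd x = 0) by nra; nra.
Qed.

Lemma cross_nonzero_r (x y : point) : cross x y <> 0 -> 0 < dot y y.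
Proof.
  intros Hc; apply (cross_nonzero_l y x); contradict Hc; coords; lra.
Qed.

Lemma orient_pos_distinct (s : R) (a b c : point) : 0 < s * orient a b c ->
  0 < dot (vsub b a) (vsub b a) /\ 0 < dot (vsub c b) (vsub c b) /\
  0 < dot (vsub c a) (vsub c a).
Proof.
  intros H.
  assert (Habc : cross (vsub b a) (vsub c a) <> 0).
  { change (orient a b c <> 0); intros E; rewrite E in H; lra. }
  assert (Hbca : cross (vsub c b) (vsub a b) <> 0).
  { replace (cross (vsub c b) (vsub a b)) with (orient a b c) by (coords; ring).
    intros E; rewrite E in H; lra. }
  split; [|split]; eauto using cross_nonzero_l, cross_nonzero_r.
Qed.

Lemma norm_sq (a : point) : norm a * norm a = dot a a.
Proof. apply sqrt_sqrt, dot_self_ge0. Qed.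

Lemma norm_pos (a : point) : 0 < dot a a -> 0 < norm a.
Proof. apply sqrt_lt_R0. Qed.

Lemma dist_norm (a b : point) : dist a b = norm (vsub b a).
Proof. unfold dist, norm; f_equal; coords; ring. Qed.

Lemma dot_unitv_self (a : point) : 0 < dot a a -> dot a (unitv a) = norm a.
Proof.
  intros Ha; pose proof (norm_sq a); pose proof (norm_pos a Ha).
  unfold unitv; transitivity (dot a a / norm a); [coords; field; lra|].
  rewrite <- H; field; lra.
Qed.

Lemma unitv_unit (a : point) : 0 < dot a a -> dot (unitv a) (unitv a) = 1.
Proof.
  intros Ha; pose proof (norm_sq a); pose proof (norm_pos a Ha).
  unfold unitv; transitivity (dot a a / (norm a * norm a)); [coords; field; lra|].
  rewrite H; field; lra.
Qed.

Lemma dot_vscale_r (k : R) (u a : point) : dot u (vscale k a) = k * dot u a.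
Proof. coords; ring. Qed.

Lemma dot_comm (a b : point) : dot a b = dot b a.
Proof. coords; ring. Qed.

Lemma cross_vscale (k l : R) (a b : point) :
  cross (vscale k a) (vscale l b) = k * l * cross a b.
Proof. coords; ring. Qed.

Lemma asin_le_compat (x y : R) : -1 <= x -> x <= y -> y <= 1 -> asin x <= asin y.
Proof.
  intros; pose proof (asin_bound x); pose proof (asin_bound y).
  apply sin_incr_0; try lra; rewrite !sin_asin; lra.
Qed.

Lemma chord_le_arc (a b : R) : 0 <= b - a <= PI ->
  (cos b - cos a) ^ 2 + (sin b - sin a) ^ 2 <= (b - a) ^ 2.
Proof.
  intros Hab; set (d := (b - a) / 2).
  assert (Hb : b = a + 2 * d) by (unfold d; lra).
  assert (Hchord : (cos b - cos a) ^ 2 + (sin b - sin a) ^ 2 = 4 * sin d ^ 2).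
  { rewrite Hb, cos_plus, sin_plus, cos_2a, sin_2a.
    pose proof (sin2_cos2 a); pose proof (sin2_cos2 d); unfold Rsqr in *; nra. }
  assert (Hsin0 : 0 <= sin d) by (apply sin_ge_0; unfold d; lra).
  assert (Hsind : sin d <= d).
  { destruct (Req_dec d 0) as [->|]; [rewrite sin_0; lra|].
    left; apply sin_lt_x; unfold d in *; lra. }
  rewrite Hchord; unfold d in *; nra.
Qed.

(* For [s = 1] or [s = -1], [dot u w] and [s * cross u w] are the coordinates
   of [w] in the orthonormal frame [u, s u^perp]; the second one is called the
   tilt of [w] below. *)
Lemma unit_frame (s : R) (u w : point) : dot u u = 1 -> s * s = 1 ->
  dot u w ^ 2 + (s * cross u w) ^ 2 = dot w w.
Proof.
  intros Hu Hs.
  replace ((s * cross u w) ^ 2) with (s * s * cross u w ^ 2) by ring.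
  rewrite Hs, Rmult_1_l, lagrange_identity, Hu; ring.
Qed.

Lemma tilt_bound (s : R) (u w : point) : dot u u = 1 -> s * s = 1 -> dot w w = 1 ->
  -1 <= s * cross u w <= 1.
Proof.
  intros Hu Hs Hw; pose proof (unit_frame s u w Hu Hs) as F; rewrite Hw in F.
  pose proof (pow2_ge_0 (dot u w)); split; nra.
Qed.

Lemma asin_unit_halfplane (f h : R) : f ^ 2 + h ^ 2 = 1 -> 0 <= f ->
  cos (asin h) = f /\ sin (asin h) = h.
Proof.
  intros E Hf; assert (Hh : -1 <= h <= 1) by nra.
  split; [|now apply sin_asin].
  rewrite cos_asin by exact Hh.
  replace (1 - h²) with (f * f) by (unfold Rsqr; nra); now apply sqrt_square.
Qed.

Lemma tilt_le_of_cross_pos (s : R) (u a b : point) :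
  dot u u = 1 -> s * s = 1 -> dot a a = 1 -> dot b b = 1 ->
  0 <= dot u a -> 0 <= dot u b -> 0 < s * cross a b ->
  s * cross u a <= s * cross u b.
Proof.
  intros Hu Hs Ha Hb Fa Fb Hab.
  pose proof (unit_frame s u a Hu Hs) as Ea; pose proof (unit_frame s u b Hu Hs) as Eb.
  rewrite Ha in Ea; rewrite Hb in Eb.
  assert (Hturn : 0 < dot u a * (s * cross u b) - s * cross u a * dot u b).
  { replace (dot u a * (s * cross u b) - s * cross u a * dot u b)
      with (dot u u * (s * cross a b)) by (coords; ring).
    rewrite Hu; lra. }
  set (fa := dot u a) in *; set (fb := dot u b) in *.
  set (ha := s * cross u a) in *; set (hb := s * cross u b) in *.
  destruct (Rle_or_lt ha hb) as [|Hlt]; [assumption|exfalso].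
  destruct (Rle_or_lt 0 hb); [assert (fa <= fb) by nra; nra|].
  destruct (Rle_or_lt 0 ha); [nra|assert (fb <= fa) by nra; nra].
Qed.

(* On unit vectors of the half-plane [0 <= dot u w], [asin] of the tilt is
   the angle from [u], and the chord between two of them is at most the arc. *)
Lemma dot_vsub_le_angle (s r : R) (u a b x : point) :
  dot u u = 1 -> s * s = 1 -> dot a a = 1 -> dot b b = 1 ->
  0 <= dot u a -> 0 <= dot u b -> s * cross u a <= s * cross u b ->
  dot x x <= r * r -> 0 <= r ->
  dot x (vsub a b) <= r * (asin (s * cross u b) - asin (s * cross u a)).
Proof.
  intros Hu Hs Ha Hb Fa Fb Hab Hx Hr.
  pose proof (unit_frame s u a Hu Hs) as Ea; pose proof (unit_frame s u b Hu Hs) as Eb.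
  rewrite Ha in Ea; rewrite Hb in Eb.
  destruct (asin_unit_halfplane _ _ Ea Fa) as [Ca Sa].
  destruct (asin_unit_halfplane _ _ Eb Fb) as [Cb Sb].
  pose proof (asin_bound (s * cross u a)); pose proof (asin_bound (s * cross u b)).
  set (A := asin (s * cross u a)) in *; set (B := asin (s * cross u b)) in *.
  assert (HAB : A <= B).
  { apply asin_le_compat; [apply (tilt_bound s u a)|exact Hab|apply (tilt_bound s u b)]; auto. }
  assert (Hchord : dot (vsub a b) (vsub a b) <= (B - A) ^ 2).
  { rewrite <- (unit_frame s u (vsub a b) Hu Hs).
    replace (dot u (vsub a b) ^ 2 + (s * cross u (vsub a b)) ^ 2)
      with ((cos B - cos A) ^ 2 + (sin B - sin A) ^ 2) by (rewrite Ca, Sa, Cb, Sb; coords; ring).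
    apply chord_le_arc; lra. }
  pose proof (cauchy_schwarz_sq x (vsub a b)) as CS.
  assert (dot x (vsub a b) ^ 2 <= (r * (B - A)) ^ 2).
  { pose proof (dot_self_ge0 x); pose proof (dot_self_ge0 (vsub a b)).
    apply (Rle_trans _ _ _ CS); replace ((r * (B - A)) ^ 2) with (r * r * (B - A) ^ 2) by ring.
    apply Rmult_le_compat; auto. }
  assert (0 <= r * (B - A)) by nra; nra.
Qed.

Definition perp (u : point) : point := (- snd u, fst u).
Definition edge (p : nat -> point) (k : nat) : point := vsub (p (S k)) (p k).

Lemma perp_frame (s k : R) (u : point) : dot u u = 1 -> s * s = 1 -> k * k = 1 ->
  dot (vscale k (perp u)) (vscale k (perp u)) = 1 /\
  dot u (vscale k (perp u)) = 0 /\ s * cross u (vscale k (perp u)) = s * k.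
Proof.
  intros Hu Hs Hk; unfold perp; coords.
  split; [|split]; [|ring|].
  - transitivity (k * k * (fst u * fst u + snd u * snd u)); [ring|rewrite Hu, Hk; ring].
  - transitivity (s * k * (fst u * fst u + snd u * snd u)); [ring|rewrite Hu; ring].
Qed.

Lemma subchain_length_le_potential (p : nat -> point) (phi : nat -> R) (i n : nat) :
  (forall k, (i <= k < i + n)%nat -> dist (p k) (p (S k)) <= phi (S k) - phi k) ->
  subchain_length p i n <= phi (i + n)%nat - phi i.
Proof.
  revert i; induction n as [|n IH]; intros i Hstep; simpl.
  - rewrite Nat.add_0_r; lra.
  - pose proof (Hstep i ltac:(lia)).
    replace (i + S n)%nat with (S i + n)%nat by lia.
    pose proof (IH (S i) ltac:(intros k Hk; apply Hstep; lia)); lra.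
Qed.

Section MonotoneConvexChainInDisk.

Variables (p : nat -> point) (i j : nat) (s r : R) (u o : point).
Hypotheses (Hij : (i < j)%nat) (Hu : dot u u = 1) (Hs : s * s = 1) (Hr : 0 <= r).
Hypothesis Hstart : vsub (p i) o = vscale (- r) u.
Hypothesis Hend : vsub (p j) o = vscale r u.
Hypothesis Hdisk : forall k, (i <= k <= j)%nat -> dot (vsub (p k) o) (vsub (p k) o) <= r * r.
Hypothesis Hedge : forall k, (i <= k < j)%nat -> 0 < dot (edge p k) (edge p k).
Hypothesis Hmono : forall k, (i <= k < j)%nat -> 0 <= dot u (edge p k).
Hypothesis Hturn : forall k, (i <= k)%nat -> (S k < j)%nat ->
  0 < s * cross (edge p k) (edge p (S k)).

(* At [p i], where no edge arrives, take the tangent of the circle with tilt -1. *)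
Definition arrival (k : nat) : point :=
  if (k =? i)%nat then vscale (- s) (perp u) else unitv (edge p (pred k)).

Definition potential (k : nat) : R :=
  r * asin (s * cross u (arrival k)) + dot (vsub (p k) o) (arrival k).

Lemma arrival_S (k : nat) : (i <= k)%nat -> arrival (S k) = unitv (edge p k).
Proof. intros Hk; unfold arrival; destruct (Nat.eqb_spec (S k) i); [lia|reflexivity]. Qed.

Lemma arrival_admissible (k : nat) : (i <= k <= j)%nat ->
  dot (arrival k) (arrival k) = 1 /\ 0 <= dot u (arrival k).
Proof.
  intros Hk; destruct (Nat.eq_dec k i) as [->|Hki].
  - unfold arrival; rewrite Nat.eqb_refl.
    destruct (perp_frame s (- s) u Hu Hs) as [H1 [H2 _]]; [lra|]; lra.
  - replace k with (S (pred k)) by lia; rewrite arrival_S by lia.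
    assert (He := Hedge (pred k) ltac:(lia)).
    split; [now apply unitv_unit|].
    unfold unitv; rewrite dot_vscale_r.
    apply Rmult_le_pos; [left; apply Rinv_0_lt_compat, norm_pos, He|apply Hmono; lia].
Qed.

Lemma arrival_tilt_le (k : nat) : (i <= k < j)%nat ->
  s * cross u (arrival k) <= s * cross u (arrival (S k)).
Proof.
  intros Hk.
  destruct (arrival_admissible k ltac:(lia)) as [Ua Fa].
  destruct (arrival_admissible (S k) ltac:(lia)) as [Ub Fb].
  destruct (Nat.eq_dec k i) as [->|Hki].
  - unfold arrival at 1; rewrite Nat.eqb_refl.
    destruct (perp_frame s (- s) u Hu Hs) as [_ [_ ->]]; [lra|].
    pose proof (tilt_bound s u (arrival (S i)) Hu Hs Ub); lra.
  - apply tilt_le_of_cross_pos; auto.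
    destruct k as [|k]; [lia|]; rewrite !arrival_S by lia.
    pose proof (norm_pos _ (Hedge k ltac:(lia))); pose proof (norm_pos _ (Hedge (S k) Hk)).
    unfold unitv; rewrite cross_vscale.
    replace (s * (/ norm (edge p k) * / norm (edge p (S k)) * cross (edge p k) (edge p (S k))))
      with (/ norm (edge p k) * / norm (edge p (S k)) * (s * cross (edge p k) (edge p (S k))))
      by ring.
    apply Rmult_lt_0_compat; [|apply Hturn; lia].
    apply Rmult_lt_0_compat; apply Rinv_0_lt_compat; assumption.
Qed.

Lemma potential_step (k : nat) : (i <= k < j)%nat ->
  dist (p k) (p (S k)) <= potential (S k) - potential k.
Proof.
  intros Hk.
  destruct (arrival_admissible k ltac:(lia)) as [Ua Fa].
  destruct (arrival_admissible (S k) ltac:(lia)) as [Ub Fb].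
  pose proof (dot_vsub_le_angle s r u (arrival k) (arrival (S k)) (vsub (p k) o)
    Hu Hs Ua Ub Fa Fb (arrival_tilt_le k Hk) (Hdisk k ltac:(lia)) Hr) as Harc.
  assert (Hlen : dist (p k) (p (S k)) = dot (edge p k) (arrival (S k))).
  { rewrite dist_norm, arrival_S by lia; symmetry; apply dot_unitv_self, Hedge; lia. }
  unfold potential; rewrite Hlen.
  replace (dot (vsub (p (S k)) o) (arrival (S k)))
    with (dot (vsub (p k) o) (arrival (S k)) + dot (edge p k) (arrival (S k)))
    by (unfold edge; coords; ring).
  replace (dot (vsub (p k) o) (vsub (arrival k) (arrival (S k))))
    with (dot (vsub (p k) o) (arrival k) - dot (vsub (p k) o) (arrival (S k)))
    in Harc by (coords; ring).
  lra.
Qed.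

Lemma potential_start : potential i = - (r * (PI / 2)).
Proof.
  unfold potential, arrival; rewrite Nat.eqb_refl, Hstart.
  destruct (perp_frame s (- s) u Hu Hs) as [_ [Hdot ->]]; [lra|].
  replace (s * - s) with (- (1)) by lra; rewrite asin_opp, asin_1.
  replace (dot (vscale (- r) u) (vscale (- s) (perp u)))
    with (- r * dot u (vscale (- s) (perp u))) by (coords; ring).
  rewrite Hdot; ring.
Qed.

Lemma potential_end : potential j <= r * (PI / 2).
Proof.
  destruct (arrival_admissible j ltac:(lia)) as [Ua Fa].
  destruct (perp_frame s s u Hu Hs Hs) as [Ue [Fe He]].
  assert (Hx : dot (vsub (p j) o) (vsub (p j) o) <= r * r).
  { rewrite Hend; right; transitivity (r * r * dot u u); [coords; ring|rewrite Hu; ring]. }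
  pose proof (dot_vsub_le_angle s r u (arrival j) (vscale s (perp u)) (vsub (p j) o)
    Hu Hs Ua Ue Fa (Req_le_sym _ _ Fe) ltac:(rewrite He, Hs; apply tilt_bound; auto)
    Hx Hr) as Harc.
  rewrite He, Hs, asin_1 in Harc.
  replace (dot (vsub (p j) o) (vsub (arrival j) (vscale s (perp u))))
    with (dot (vsub (p j) o) (arrival j)) in Harc
    by (rewrite Hend; transitivity (dot (vscale r u) (arrival j) - r * dot u (vscale s (perp u)));
        [rewrite Fe; ring|coords; ring]).
  unfold potential; lra.
Qed.

Lemma monotone_convex_chain_in_disk_length : subchain_length p i (j - i) <= r * PI.
Proof.
  pose proof (subchain_length_le_potential p potential i (j - i)
    ltac:(intros k Hk; apply potential_step; lia)) as H.
  replace (i + (j - i))%nat with j in H by lia.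
  pose proof potential_start; pose proof potential_end; lra.
Qed.

End MonotoneConvexChainInDisk.

Lemma thales_identity (a b x : point) :
  dot (vsub x (midpoint a b)) (vsub x (midpoint a b)) =
  dot (vsub b a) (vsub b a) / 4 + dot (vsub a x) (vsub b x).
Proof. unfold midpoint; coords; field. Qed.

Lemma midpoint_diameter_ends (a b : point) : 0 < dot (vsub b a) (vsub b a) ->
  vsub a (midpoint a b) = vscale (- (norm (vsub b a) / 2)) (unitv (vsub b a)) /\
  vsub b (midpoint a b) = vscale (norm (vsub b a) / 2) (unitv (vsub b a)).
Proof.
  intros Hab; pose proof (norm_pos _ Hab).
  unfold unitv, midpoint; coords; split; f_equal; field; lra.
Qed.

Lemma in_diam_disk_dot (a b x : point) : in_diam_disk a b x -> dot (vsub a x) (vsub b x) <= 0.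
Proof.
  unfold in_diam_disk.
  replace (dist x _) with (sqrt (dot (vsub x (midpoint a b)) (vsub x (midpoint a b))))
    by (unfold dist, midpoint; f_equal; coords; ring).
  rewrite dist_norm; unfold norm; intros H.
  pose proof (thales_identity a b x) as Hth.
  set (A := dot (vsub x (midpoint a b)) (vsub x (midpoint a b))) in *.
  set (B := dot (vsub b a) (vsub b a)) in *.
  pose proof (sqrt_pos A); pose proof (sqrt_sqrt A (dot_self_ge0 _)).
  pose proof (sqrt_sqrt B (dot_self_ge0 _)); nra.
Qed.

Lemma seg_point_0 (a b : point) : seg_point a b 0 = a.
Proof. destruct a; unfold seg_point; simpl; f_equal; ring. Qed.

Lemma vertex_in_diam_disk (c : nat -> point) (m k : nat) :
  chain_in_diam_disk c m -> (k < m)%nat ->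
  dot (vsub (c 0%nat) (c k)) (vsub (c (m - 1)%nat) (c k)) <= 0.
Proof.
  intros Hdisk Hk; destruct (Nat.eq_dec k (m - 1)) as [->|Hne].
  - right; coords; ring.
  - rewrite <- (seg_point_0 (c k) (c (S k))).
    apply in_diam_disk_dot, Hdisk; [lia|lra].
Qed.

Lemma dot_nonpos_turn (s : R) (x y z : point) :
  0 < dot y y -> dot x y <= 0 -> 0 <= s * cross x y -> 0 <= s * cross y z ->
  0 < s * cross x z -> dot x z <= 0.
Proof.
  intros Hy Dxy Cxy Cyz Cxz.
  assert (Edot : dot y y * dot x z = dot x y * dot y z - cross x y * cross y z)
    by (coords; ring).
  assert (Ecross : dot y y * cross x z = cross x y * dot y z + dot x y * cross y z)
    by (coords; ring).
  assert (Hprod : 0 <= cross x y * cross y z).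
  { assert (s <> 0) by (intros Hs0; rewrite Hs0 in Cxz; lra).
    assert (0 < s * s) by nra; nra. }
  destruct (Rle_or_lt 0 (dot y z)) as [Hyz|Hyz].
  - assert (dot y y * dot x z <= 0) by nra; nra.
  - exfalso.
    assert (s * (dot y y * cross x z) <= 0) by (rewrite Ecross; nra); nra.
Qed.

Lemma diam_disk_projections (a b x : point) : dot (vsub a x) (vsub b x) <= 0 ->
  0 <= dot (vsub x a) (vsub b a) /\ 0 <= dot (vsub b x) (vsub b a).
Proof.
  intros H; pose proof (dot_self_ge0 (vsub x a)); pose proof (dot_self_ge0 (vsub b x)).
  split; coords; nra.
Qed.

Lemma edge_dot_chord_nonneg (s : R) (a p q b : point) :
  0 < s * orient a p b -> 0 < s * orient a p q -> 0 < s * orient p q b ->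
  dot (vsub a p) (vsub b p) <= 0 -> 0 <= dot (vsub q p) (vsub b a).
Proof.
  intros Hapb Hapq Hpqb Hobt.
  destruct (diam_disk_projections a b p Hobt) as [Pa Pb].
  assert (E : orient a p b * dot (vsub q p) (vsub b a) =
              orient p q b * dot (vsub p a) (vsub b a) + orient a p q * dot (vsub b p) (vsub b a))
    by (coords; ring).
  assert (0 <= s * (orient a p b * dot (vsub q p) (vsub b a))).
  { rewrite E; nra. }
  nra.
Qed.

Lemma convex_chain_sign (c : nat -> point) (m : nat) : convex_chain c m ->
  exists s, s * s = 1 /\ forall i j k, (i < j)%nat -> (j < k)%nat -> (k < m)%nat ->
    0 < s * orient (c i) (c j) (c k).
Proof.
  intros [H|H]; [exists 1|exists (-1)]; split; try ring;
    intros i j k Hij Hjk Hkm; specialize (H i j k Hij Hjk Hkm); lra.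
Qed.

Section ConvexChainInDisk.

Variables (c : nat -> point) (m : nat) (s : R).
Hypothesis Hs : s * s = 1.
Hypothesis Horient : forall i j k, (i < j)%nat -> (j < k)%nat -> (k < m)%nat ->
  0 < s * orient (c i) (c j) (c k).
Hypothesis Hvertex : forall k, (k < m)%nat ->
  dot (vsub (c 0%nat) (c k)) (vsub (c (m - 1)%nat) (c k)) <= 0.

Lemma orient_nonneg (i j k : nat) : (i <= j)%nat -> (j <= k)%nat -> (k < m)%nat ->
  0 <= s * orient (c i) (c j) (c k).
Proof.
  intros Hij Hjk Hkm.
  destruct (Nat.eq_dec i j) as [->|]; [right; coords; ring|].
  destruct (Nat.eq_dec j k) as [->|]; [right; coords; ring|].
  left; apply Horient; lia.
Qed.

(* By convexity, the obtuse angle at [c k] between [p] and [q] widens first to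
   the one between [c i] and [q], then to the one between [c i] and [c j]. *)
Lemma subchain_vertex_in_diam_disk (i j k : nat) : (i <= k <= j)%nat -> (j < m)%nat ->
  dot (vsub (c i) (c k)) (vsub (c j) (c k)) <= 0.
Proof.
  intros Hk Hjm.
  destruct (Nat.eq_dec k i) as [->|Hki]; [right; coords; ring|].
  destruct (Nat.eq_dec k j) as [->|Hkj]; [right; coords; ring|].
  set (a := vsub (c 0%nat) (c k)); set (b := vsub (c i) (c k)).
  set (d := vsub (c (m - 1)%nat) (c k)); set (e := vsub (c j) (c k)).
  assert (O1 := Horient 0 k (m - 1) ltac:(lia) ltac:(lia) ltac:(lia)).
  assert (O2 := orient_nonneg 0 i k ltac:(lia) ltac:(lia) ltac:(lia)).
  assert (O3 := Horient i k (m - 1) ltac:(lia) ltac:(lia) ltac:(lia)).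
  assert (O4 := orient_nonneg k j (m - 1) ltac:(lia) ltac:(lia) ltac:(lia)).
  assert (O5 := Horient i k j ltac:(lia) ltac:(lia) ltac:(lia)).
  assert (Cda : 0 < s * cross d a) by (unfold a, d; coords; lra).
  assert (Hdb : dot d b <= 0).
  { apply (dot_nonpos_turn s d a b).
    - apply (cross_nonzero_r d a); intros E; rewrite E in Cda; lra.
    - rewrite dot_comm; apply Hvertex; lia.
    - lra.
    - unfold a, b; coords; lra.
    - unfold b, d; coords; lra. }
  apply (dot_nonpos_turn (- s) b d e).
  - apply (cross_nonzero_l d a); intros E; rewrite E in Cda; lra.
  - rewrite dot_comm; exact Hdb.
  - unfold b, d; coords; lra.
  - unfold d, e; coords; lra.
  - unfold b, e; coords; lra.
Qed.

Lemma subchain_edge_dot_chord_nonneg (i j k : nat) : (i <= k < j)%nat -> (j < m)%nat ->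
  0 <= dot (vsub (c j) (c i)) (edge c k).
Proof.
  intros Hk Hjm; rewrite dot_comm; unfold edge.
  destruct (Nat.eq_dec k i) as [->|Hki].
  { apply (diam_disk_projections (c i) (c j) (c (S i))), subchain_vertex_in_diam_disk; lia. }
  destruct (Nat.eq_dec (S k) j) as [<-|Hkj].
  { apply (diam_disk_projections (c i) (c (S k)) (c k)), subchain_vertex_in_diam_disk; lia. }
  apply (edge_dot_chord_nonneg s); try (apply Horient; lia).
  apply subchain_vertex_in_diam_disk; lia.
Qed.

Lemma convex_subchain_stretch (i j : nat) : (S i < j)%nat -> (j < m)%nat ->
  subchain_length c i (j - i) <= PI / 2 * dist (c i) (c j).
Proof.
  intros Hij Hjm.
  set (v := vsub (c j) (c i)).
  assert (Hv : 0 < dot v v) by (apply (orient_pos_distinct s (c i) (c (S i)) (c j)), Horient; lia).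
  pose proof (norm_pos v Hv) as Hnorm; pose proof (norm_sq v) as Hnorm_sq.
  rewrite dist_norm; fold v.
  replace (PI / 2 * norm v) with (norm v / 2 * PI) by field.
  apply (monotone_convex_chain_in_disk_length c i j s (norm v / 2) (unitv v)
           (midpoint (c i) (c j))); try lia; try lra.
  - now apply unitv_unit.
  - apply midpoint_diameter_ends, Hv.
  - apply midpoint_diameter_ends, Hv.
  - intros k Hk; rewrite thales_identity.
    pose proof (subchain_vertex_in_diam_disk i j k Hk Hjm); fold v; lra.
  - intros k Hk; unfold edge.
    destruct (Nat.eq_dec (S k) j) as [<-|Hkj].
    + apply (orient_pos_distinct s (c i) (c k) (c (S k))), Horient; lia.
    + apply (orient_pos_distinct s (c k) (c (S k)) (c j)), Horient; lia.
  - intros k Hk; rewrite dot_comm; unfold unitv; rewrite dot_vscale_r, dot_comm.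
    apply Rmult_le_pos; [left; apply Rinv_0_lt_compat, Hnorm|].
    apply subchain_edge_dot_chord_nonneg; lia.
  - intros k Hk Hkj.
    assert (Ht := Horient k (S k) (S (S k)) ltac:(lia) ltac:(lia) ltac:(lia)).
    unfold edge; coords; lra.
Qed.

End ConvexChainInDisk.

Theorem theorem6 (c : nat -> point) (m : nat) :
  convex_chain c m ->
  chain_in_diam_disk c m ->
  stretch_at_most c m (PI / 2).
Proof.
  intros Hconv Hdisk i j Hij Hjm.
  destruct (convex_chain_sign c m Hconv) as [s [Hs Horient]].
  assert (Hdist : 0 <= dist (c i) (c j)) by (unfold dist; apply sqrt_pos).
  assert (Hpi : 1 <= PI / 2) by (pose proof PI2_1; lra).
  destruct (Nat.eq_dec j i) as [->|Hji].
  { rewrite Nat.sub_diag; simpl; nra. }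
  destruct (Nat.eq_dec j (S i)) as [->|HjSi].
  { replace (S i - i)%nat with 1%nat by lia; simpl; nra. }
  apply (convex_subchain_stretch c m s); auto; [|lia].
  intros k Hk; apply vertex_in_diam_disk; assumption.
Qed.
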